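(* If $G$ is a special grid operator and $k\in\mathbb Z$, then $G'=\sigma^kG\sigma^k$ is a special grid operator and moreover $G'^{\bullet}=(-\tau)^kG^\bullet\tau^k$.
   Context: Let $\omega=e^{i\pi/4}$, $\lambda=1+\sqrt2$, and $\mathbb Z[\omega]=\{a_0+a_1\omega+a_2\omega^2+a_3\omega^3: a_j\in\mathbb Z\}\subseteq\mathbb C\cong\mathbb R^2$. A grid operator is a real linear map $G:\mathbb R^2\to\mathbb R^2$ with $G(\mathbb Z[\omega])\subseteq\mathbb Z[\omega]$ (its entries lie in $\mathbb Q(\sqrt2)$); it is special if $\det G=\pm1$. For a matrix $M$ with entries in $\mathbb Q(\sqrt2)$, $M^\bullet$ is obtained by applying $(x+y\sqrt2)^\bullet=x-y\sqrt2$ to each entry. Let $\sigma=\sqrt{\lambda^{-1}}\begin{bmatrix}\lambda&0\\0&1\end{bmatrix}$ and $\tau=\sqrt{\lambda^{-1}}\begin{bmatrix}1&0\\0&-\lambda\end{bmatrix}$. *)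

From HB Require Import structures.
From mathcomp Require Import all_boot all_order all_algebra.
From mathcomp Require Import boolp.
Set Implicit Arguments. Unset Strict Implicit. Unset Printing Implicit Defensive.
Import Order.TTheory GRing.Theory Num.Theory.
Local Open Scope ring_scope.

Section GridDefs.
Variable R : rcfType.

Definition sqrt2 : R := Num.sqrt 2.
Definition lam : R := 1 + sqrt2.

(* the column vector (x, y) in R^2, identified with x + i y in C *)
Definition vec2 (x y : R) : 'cV[R]_2 := \col_(i < 2) (if i == ord0 then x else y).

(* omega^j for j = 0..3, with omega = e^{i pi/4} = (sqrt2/2, sqrt2/2) *)
Definition om0 : 'cV[R]_2 := vec2 1 0.
Definition om1 : 'cV[R]_2 := vec2 (sqrt2 / 2) (sqrt2 / 2).
Definition om2 : 'cV[R]_2 := vec2 0 1.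
Definition om3 : 'cV[R]_2 := vec2 (- (sqrt2 / 2)) (sqrt2 / 2).

Definition inZomega (v : 'cV[R]_2) : Prop :=
  exists a0 a1 a2 a3 : int,
    v = a0%:~R *: om0 + a1%:~R *: om1 + a2%:~R *: om2 + a3%:~R *: om3.

Definition grid_op (G : 'M[R]_2) : Prop :=
  forall v, inZomega v -> inZomega (G *m v).

Definition special_grid_op (G : 'M[R]_2) : Prop :=
  grid_op G /\ (\det G = 1 \/ \det G = -1).

(* conjugation (x + y sqrt2)^bullet = x - y sqrt2 on Q(sqrt2);
   (arbitrarily the identity outside Q(sqrt2), never used there) *)
Definition conj2 (x : R) : R :=
  match pselect (exists p : rat * rat, x = ratr p.1 + ratr p.2 * sqrt2) with
  | left H => let p := proj1_sig (cid H) in ratr p.1 - ratr p.2 * sqrt2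
  | right _ => x
  end.

Definition bullet (M : 'M[R]_2) : 'M[R]_2 := map_mx conj2 M.

Definition diag2 (a b : R) : 'M[R]_2 :=
  \matrix_(i < 2, j < 2) (if i == j then (if i == ord0 then a else b) else 0).

Definition sigma : 'M[R]_2 := Num.sqrt (lam^-1) *: diag2 lam 1.
Definition tau : 'M[R]_2 := Num.sqrt (lam^-1) *: diag2 1 (- lam).

End GridDefs.

From Pilot Require Import Defs.
From mathcomp Require Import all_boot all_order all_algebra.
From mathcomp Require Import boolp ring lra zify.
Set Implicit Arguments. Unset Strict Implicit. Unset Printing Implicit Defensive.
Import Order.TTheory GRing.Theory Num.Theory.
Local Open Scope ring_scope.

(* sigma^k and tau^k are diagonal, so sandwiching a matrix between
   them rescales its entries; the square-root factors pair up and cancel, giving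
   sigma^k G sigma^k = diag(lam^k, 1) G diag(1, lam^-k) and
   (-tau)^k H tau^k = diag((1 - sqrt2)^k, 1) H diag(1, (-1 - sqrt2)^k).
   The first is a product of grid operators of determinants lam^k, det G,
   lam^-k.  For the second, note that 1 - sqrt2 and -1 - sqrt2 are the
   conjugates of lam and lam^-1, that all entries of a grid operator lie in
   Q(sqrt2), and that conjugation is multiplicative on Q(sqrt2); the
   irrationality of sqrt2 is what makes conjugation well defined there. *)

Lemma sqrn_neq_double (a b : nat) : (0 < b)%N -> (a * a <> 2 * (b * b))%N.
Proof.
move=> b_gt0 e.
have a_gt0 : (0 < a)%N by case: a e => //; rewrite muln0; lia.
have := congr1 (logn 2) e.
rewrite !lognM ?muln_gt0 ?a_gt0 ?b_gt0 // (logn_prime 2 (isT : prime 2)) /=.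
lia.
Qed.

Lemma rat_sqr_neq2 (r : rat) : r * r <> 2.
Proof.
move=> r2.
have den_neq0 : (denq r)%:~R != 0 :> rat by rewrite intr_eq0 denq_neq0.
have e : numq r * numq r = 2 * (denq r * denq r).
  apply: (@intr_inj rat); rewrite !rmorphM /=.
  have -> : (2%:~R : rat) = 2 by [].
  by rewrite -(divq_num_den r) in r2; rewrite -r2; field.
have := congr1 absz e; rewrite !abszM /=.
by apply: sqrn_neq_double; rewrite absz_gt0 denq_neq0.
Qed.

Lemma ord2P (i : 'I_2) : i = ord0 \/ i = ord_max.
Proof. by case: i => [[|[|//]]] Hi; [left|right]; apply/val_inj. Qed.

Section GridOperators.
Variable R : rcfType.
Local Notation s2 := (sqrt2 R).
Local Notation lam := (lam R).
Local Notation diag2 := (@diag2 R).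
Local Notation vec2 := (@vec2 R).
Local Notation inZomega := (@inZomega R).
Local Notation grid_op := (@grid_op R).
Local Notation conj2 := (@conj2 R).

Lemma sqrt2_sqr : s2 * s2 = 2.
Proof. by rewrite /sqrt2 -expr2 sqr_sqrtr // ler0n. Qed.

Lemma sqrt2_gt0 : 0 < s2.
Proof. by rewrite /sqrt2 sqrtr_gt0 ltr0n. Qed.

Lemma lam_neq0 : lam != 0.
Proof. by rewrite /Defs.lam gt_eqF //; have := sqrt2_gt0; lra. Qed.

Lemma lamV : lam^-1 = s2 - 1.
Proof. by apply: mulr1_eq; rewrite /Defs.lam; have := sqrt2_sqr; lra. Qed.

Lemma sum_ord2 (f : 'I_2 -> R) : \sum_i f i = f ord0 + f ord_max.
Proof. by rewrite big_ord_recr big_ord1; congr (f _ + _); apply/val_inj. Qed.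

Lemma mul_diag2_mx a b (M : 'M[R]_2) i j :
  (diag2 a b * M) i j = (if i == ord0 then a else b) * M i j.
Proof.
by rewrite -mulmxE mxE sum_ord2 !mxE; case: (ord2P i) => ->; rewrite /=; ring.
Qed.

Lemma mul_mx_diag2 a b (M : 'M[R]_2) i j :
  (M * diag2 a b) i j = M i j * (if j == ord0 then a else b).
Proof.
by rewrite -mulmxE mxE sum_ord2 !mxE; case: (ord2P j) => ->; rewrite /=; ring.
Qed.

Lemma diag2M a b c d : diag2 a b * diag2 c d = diag2 (a * c) (b * d).
Proof.
apply/matrixP => i j; rewrite mul_diag2_mx !mxE.
by case: (ord2P i) => ->; case: (ord2P j) => ->; rewrite /=; ring.
Qed.

Lemma diag2_11 : diag2 1 1 = 1.
Proof.
by apply/matrixP => i j; rewrite !mxE; case: (ord2P i) => ->; case: (ord2P j) => ->.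
Qed.

Lemma scale_diag2 c a b : c *: diag2 a b = diag2 (c * a) (c * b).
Proof.
by apply/matrixP => i j; rewrite !mxE; case: (i == j); case: (i == ord0); rewrite ?mulr0.
Qed.

Lemma opp_diag2 a b : - diag2 a b = diag2 (- a) (- b).
Proof.
by apply/matrixP => i j; rewrite !mxE; case: (i == j); case: (i == ord0); rewrite ?oppr0.
Qed.

Lemma det_diag2 a b : \det (diag2 a b) = a * b.
Proof.
have -> : diag2 a b = diag_mx (\row_i (if i == ord0 then a else b)).
  by apply/matrixP => i j; rewrite !mxE; case: (i == j).
by rewrite det_diag big_ord_recr big_ord1 !mxE.
Qed.

Lemma diag2X a b n : diag2 a b ^+ n = diag2 (a ^+ n) (b ^+ n).
Proof.
elim: n => [|n IHn]; first by rewrite !expr0 diag2_11.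
by rewrite exprS IHn diag2M -!exprS.
Qed.

Lemma diag2V a b : a != 0 -> b != 0 -> (diag2 a b)^-1 = diag2 a^-1 b^-1.
Proof.
move=> a_neq0 b_neq0.
have diag2K : diag2 a^-1 b^-1 * diag2 a b = 1 by rewrite diag2M !mulVf // diag2_11.
have diag2_unit : diag2 a b \is a GRing.unit.
  by apply/unitrP; exists (diag2 a^-1 b^-1); rewrite diag2K diag2M !divff // diag2_11.
by rewrite -[RHS]mulr1 -(mulrV diag2_unit) mulrA diag2K mul1r.
Qed.

Lemma diag2Z a b (k : int) : a != 0 -> b != 0 ->
  diag2 a b ^ k = diag2 (a ^ k) (b ^ k).
Proof.
move=> a_neq0 b_neq0; case: k => n; first by rewrite -!exprnP diag2X.
by rewrite NegzE -!exprnN diag2X diag2V ?expf_neq0.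
Qed.

(* Entry (i, j) is scaled by u_i v_j, and b c = 1 lets the off-diagonal
   factors a d and b c be written as (a c) (b d) and 1. *)
Lemma diag2_sandwich a b c d (M : 'M[R]_2) : b * c = 1 ->
  diag2 a b * M * diag2 c d = diag2 (a * c) 1 * M * diag2 1 (b * d).
Proof.
move=> bc1; apply/matrixP => i j; rewrite !mul_mx_diag2 !mul_diag2_mx.
by case: (ord2P i) => ->; case: (ord2P j) => -> /=; ring: bc1.
Qed.

Local Notation sq := (Num.sqrt (lam^-1)).

Lemma sqrt_lamV_sqr : sq * sq = lam^-1.
Proof.
by rewrite -expr2 sqr_sqrtr // lamV subr_ge0; have := sqrt2_sqr; have := sqrt2_gt0; nra.
Qed.

Lemma sqrt_lamV_neq0 : sq != 0.
Proof.
apply/eqP => sq0; move: sqrt_lamV_sqr; rewrite sq0 mulr0 => /esym/eqP.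
by rewrite invr_eq0 (negPf lam_neq0).
Qed.

Lemma sigma_sandwich (M : 'M[R]_2) (k : int) :
  sigma R ^ k * M * sigma R ^ k = diag2 (lam ^ k) 1 * M * diag2 1 (lam^-1 ^ k).
Proof.
have sq2 := sqrt_lamV_sqr; have lamK := mulVf lam_neq0.
rewrite /sigma scale_diag2 mulr1 diag2Z ?mulf_neq0 ?lam_neq0 ?sqrt_lamV_neq0 //.
rewrite [LHS]diag2_sandwich -!expfzMl; last first.
  by rewrite -[RHS](exp1rz _ k); congr (_ ^ k); ring: sq2 lamK.
by congr (diag2 (_ ^ k) 1 * M * diag2 1 (_ ^ k)); ring: sq2 lamK.
Qed.

Lemma tau_sandwich (M : 'M[R]_2) (k : int) :
  (- tau R) ^ k * M * tau R ^ k = diag2 ((1 - s2) ^ k) 1 * M * diag2 1 ((-1 - s2) ^ k).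
Proof.
have sq2 := sqrt_lamV_sqr; have lamK := mulVf lam_neq0.
have lamVE := lamV; have lamE : lam = 1 + s2 by [].
rewrite /tau scale_diag2 opp_diag2 mulr1.
rewrite !diag2Z ?oppr_eq0 ?mulf_neq0 ?oppr_eq0 ?lam_neq0 ?sqrt_lamV_neq0 //.
rewrite [LHS]diag2_sandwich -!expfzMl; last first.
  by rewrite -[RHS](exp1rz _ k); congr (_ ^ k); ring: sq2 lamK.
by congr (diag2 (_ ^ k) 1 * M * diag2 1 (_ ^ k)); ring: sq2 lamK lamVE lamE.
Qed.

Lemma vec2D x y x' y' : vec2 x y + vec2 x' y' = vec2 (x + x') (y + y').
Proof. by apply/matrixP => i j; rewrite !mxE; case: (i == ord0). Qed.

Lemma vec2Z c x y : c *: vec2 x y = vec2 (c * x) (c * y).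
Proof. by apply/matrixP => i j; rewrite !mxE; case: (i == ord0). Qed.

Lemma mulmx_vec2 (M : 'M[R]_2) x y : M *m vec2 x y =
  vec2 (M ord0 ord0 * x + M ord0 ord_max * y) (M ord_max ord0 * x + M ord_max ord_max * y).
Proof. by apply/matrixP => i j; rewrite !mxE sum_ord2 !mxE; case: (ord2P i) => ->. Qed.

Lemma mul_diag2_vec2 a b x y : diag2 a b *m vec2 x y = vec2 (a * x) (b * y).
Proof. by rewrite mulmx_vec2 !mxE /=; congr vec2; ring. Qed.

(* Coordinates of a0 + a1 w + a2 w^2 + a3 w^3 in R^2. *)
Definition zomega (a0 a1 a2 a3 : int) : 'cV[R]_2 :=
  vec2 (a0%:~R + (a1%:~R - a3%:~R) * (s2 / 2)) (a2%:~R + (a1%:~R + a3%:~R) * (s2 / 2)).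

Lemma inZomegaE v : inZomega v <-> exists a0 a1 a2 a3, v = zomega a0 a1 a2 a3.
Proof.
have omegaE a0 a1 a2 a3 : a0%:~R *: om0 R + a1%:~R *: om1 R + a2%:~R *: om2 R
    + a3%:~R *: om3 R = zomega a0 a1 a2 a3.
  by rewrite /om0 /om1 /om2 /om3 !vec2Z !vec2D /zomega; congr vec2; ring.
by split=> -[a0 [a1 [a2 [a3 ->]]]]; exists a0, a1, a2, a3; rewrite omegaE.
Qed.

Lemma inZomega_vec2 (a0 a1 a2 a3 : int) x y :
  x = a0%:~R + (a1%:~R - a3%:~R) * (s2 / 2) ->
  y = a2%:~R + (a1%:~R + a3%:~R) * (s2 / 2) -> inZomega (vec2 x y).
Proof. by move=> -> ->; apply/inZomegaE; exists a0, a1, a2, a3. Qed.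

Lemma inZomegaD u v : inZomega u -> inZomega v -> inZomega (u + v).
Proof.
move=> /inZomegaE [a0 [a1 [a2 [a3 ->]]]] /inZomegaE [b0 [b1 [b2 [b3 ->]]]].
by rewrite /zomega vec2D; apply: (@inZomega_vec2 (a0 + b0) (a1 + b1) (a2 + b2) (a3 + b3));
  rewrite !intrD; ring.
Qed.

Lemma inZomegaZ (z : int) v : inZomega v -> inZomega (z%:~R *: v).
Proof.
move=> /inZomegaE [a0 [a1 [a2 [a3 ->]]]].
by rewrite /zomega vec2Z; apply: (@inZomega_vec2 (z * a0) (z * a1) (z * a2) (z * a3));
  rewrite !intrM; ring.
Qed.

Lemma grid_op_basis (M : 'M[R]_2) :
  inZomega (M *m om0 R) -> inZomega (M *m om1 R) ->
  inZomega (M *m om2 R) -> inZomega (M *m om3 R) -> grid_op M.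
Proof.
move=> M0 M1 M2 M3 v [a0 [a1 [a2 [a3 ->]]]].
rewrite !mulmxDr -!scalemxAr.
by repeat apply: inZomegaD; apply: inZomegaZ.
Qed.

Lemma grid_opM (A B : 'M[R]_2) : grid_op A -> grid_op B -> grid_op (A * B).
Proof. by move=> gridA gridB v Zv; rewrite -mulmxE -mulmxA; apply/gridA/gridB. Qed.

Lemma grid_op1 : grid_op (1 : 'M[R]_2).
Proof. by move=> v Zv; rewrite -[1]/(1%:M) mul1mx. Qed.

Lemma grid_opX (A : 'M[R]_2) n : grid_op A -> grid_op (A ^+ n).
Proof.
move=> gridA; elim: n => [|n IHn]; first by rewrite expr0; apply: grid_op1.
by rewrite exprS; apply: grid_opM.
Qed.

Lemma grid_opZ (A : 'M[R]_2) (k : int) : grid_op A -> grid_op A^-1 -> grid_op (A ^ k).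
Proof.
move=> gridA gridAV; case: k => n; first by rewrite -exprnP; apply: grid_opX.
by rewrite NegzE -exprnN -exprVn; apply: grid_opX.
Qed.

Lemma grid_op_diag2_lam_1 : grid_op (diag2 lam 1).
Proof.
have s2s2 := sqrt2_sqr.
apply: grid_op_basis; rewrite /om0 /om1 /om2 /om3 mul_diag2_vec2 /Defs.lam.
- by apply: (@inZomega_vec2 1 1 0 (-1)); field: s2s2.
- by apply: (@inZomega_vec2 1 1 0 0); field: s2s2.
- by apply: (@inZomega_vec2 0 0 1 0); field: s2s2.
- by apply: (@inZomega_vec2 (-1) 0 0 1); field: s2s2.
Qed.

Lemma grid_op_diag2_lamV_1 : grid_op (diag2 lam^-1 1).
Proof.
have s2s2 := sqrt2_sqr.
apply: grid_op_basis; rewrite lamV /om0 /om1 /om2 /om3 mul_diag2_vec2.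
- by apply: (@inZomega_vec2 (-1) 1 0 (-1)); field: s2s2.
- by apply: (@inZomega_vec2 1 0 0 1); field: s2s2.
- by apply: (@inZomega_vec2 0 0 1 0); field: s2s2.
- by apply: (@inZomega_vec2 (-1) 1 0 0); field: s2s2.
Qed.

Lemma grid_op_diag2_1_lam : grid_op (diag2 1 lam).
Proof.
have s2s2 := sqrt2_sqr.
apply: grid_op_basis; rewrite /om0 /om1 /om2 /om3 mul_diag2_vec2 /Defs.lam.
- by apply: (@inZomega_vec2 1 0 0 0); field: s2s2.
- by apply: (@inZomega_vec2 0 1 1 0); field: s2s2.
- by apply: (@inZomega_vec2 0 1 1 1); field: s2s2.
- by apply: (@inZomega_vec2 0 0 1 1); field: s2s2.
Qed.

Lemma grid_op_diag2_1_lamV : grid_op (diag2 1 lam^-1).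
Proof.
have s2s2 := sqrt2_sqr.
apply: grid_op_basis; rewrite lamV /om0 /om1 /om2 /om3 mul_diag2_vec2.
- by apply: (@inZomega_vec2 1 0 0 0); field: s2s2.
- by apply: (@inZomega_vec2 0 0 1 (-1)); field: s2s2.
- by apply: (@inZomega_vec2 0 1 (-1) 1); field: s2s2.
- by apply: (@inZomega_vec2 0 (-1) 1 0); field: s2s2.
Qed.

Lemma grid_op_diag2_lamZ_1 (k : int) : grid_op (diag2 (lam ^ k) 1).
Proof.
rewrite -(exp1rz R k) -diag2Z ?lam_neq0 ?oner_neq0 //.
apply: grid_opZ; first exact: grid_op_diag2_lam_1.
by rewrite diag2V ?lam_neq0 ?oner_neq0 // invr1; apply: grid_op_diag2_lamV_1.
Qed.

Lemma grid_op_diag2_1_lamVZ (k : int) : grid_op (diag2 1 (lam^-1 ^ k)).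
Proof.
rewrite -(exp1rz R k) -diag2Z ?invr_eq0 ?lam_neq0 ?oner_neq0 //.
apply: grid_opZ; first exact: grid_op_diag2_1_lamV.
by rewrite diag2V ?invr_eq0 ?lam_neq0 ?oner_neq0 // invr1 invrK; apply: grid_op_diag2_1_lam.
Qed.

Definition inQsqrt2 (x : R) := exists p q : rat, x = ratr p + ratr q * s2.

Lemma ratr_sqrt2_inj p q p' q' : ratr p + ratr q * s2 = ratr p' + ratr q' * s2 ->
  p = p' /\ q = q'.
Proof.
have [<- e|q_neq e] := eqVneq q q'.
  by split=> //; apply: (fmorph_inj (@ratr R)); apply: addIr e.
have dq_neq0 : ratr q' - ratr q != 0 :> R by rewrite -rmorphB fmorph_eq0 subr_eq0 eq_sym.
have s2_rat : ratr ((p - p') / (q' - q)) = s2.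
  rewrite fmorph_div !rmorphB /=; apply: (mulIf dq_neq0); rewrite mulfVK //.
  move: e; move: (ratr p : R) (ratr p') (ratr q) (ratr q') => a b c d e.
  have -> : a = b + d * s2 - c * s2 by rewrite -e addrK.
  ring.
suff : (p - p') / (q' - q) * ((p - p') / (q' - q)) = 2 by move/rat_sqr_neq2.
apply: (fmorph_inj (@ratr R)).
by rewrite rmorphM /= s2_rat sqrt2_sqr rmorph_nat.
Qed.

Lemma conj2E p q : conj2 (ratr p + ratr q * s2) = ratr p - ratr q * s2.
Proof.
rewrite /conj2; case: pselect => [ex|]; last by case; exists (p, q).
by case: (cid ex) => -[p' q'] /= /ratr_sqrt2_inj [-> ->].
Qed.

Lemma ratr_sqrt2M p q p' q' : (ratr p + ratr q * s2) * (ratr p' + ratr q' * s2) =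
  ratr (p * p' + 2 * q * q') + ratr (p * q' + q * p') * s2 :> R.
Proof.
rewrite !rmorphD !rmorphM /= rmorph_nat; have s2s2 := sqrt2_sqr.
by move: (ratr p) (ratr p') (ratr q) (ratr q') => a b c d; ring: s2s2.
Qed.

Lemma inQsqrt2M x y : inQsqrt2 x -> inQsqrt2 y -> inQsqrt2 (x * y).
Proof. by move=> [p [q ->]] [p' [q' ->]]; rewrite ratr_sqrt2M; do 2 eexists. Qed.

Lemma conj2M x y : inQsqrt2 x -> inQsqrt2 y -> conj2 (x * y) = conj2 x * conj2 y.
Proof.
move=> [p [q ->]] [p' [q' ->]]; rewrite ratr_sqrt2M !conj2E !rmorphD !rmorphM /= rmorph_nat.
by have s2s2 := sqrt2_sqr; move: (ratr p) (ratr p') (ratr q) (ratr q') => a b c d; ring: s2s2.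
Qed.

Lemma inQsqrt2_rat (r : rat) : inQsqrt2 (ratr r).
Proof. by exists r, 0; rewrite rmorph0 mul0r addr0. Qed.

Lemma conj2_rat (r : rat) : conj2 (ratr r) = ratr r.
Proof.
have -> : conj2 (ratr r) = conj2 (ratr r + ratr 0 * s2) by rewrite rmorph0 mul0r addr0.
by rewrite conj2E rmorph0 mul0r subr0.
Qed.

Lemma inQsqrt2_1 : inQsqrt2 1.
Proof. by rewrite -(rmorph1 (@ratr R)); apply: inQsqrt2_rat. Qed.

Lemma conj2_1 : conj2 1 = 1.
Proof. by rewrite -(rmorph1 (@ratr R)) conj2_rat. Qed.

Lemma inQsqrt2X x n : inQsqrt2 x -> inQsqrt2 (x ^+ n).
Proof.
move=> Qx; elim: n => [|n IHn]; last by rewrite exprS; apply: inQsqrt2M.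
by rewrite expr0; apply: inQsqrt2_1.
Qed.

Lemma conj2X x n : inQsqrt2 x -> conj2 (x ^+ n) = conj2 x ^+ n.
Proof.
move=> Qx; elim: n => [|n IHn]; last by rewrite !exprS conj2M ?IHn //; apply: inQsqrt2X.
by rewrite !expr0 conj2_1.
Qed.

Lemma conj2V x : inQsqrt2 x -> inQsqrt2 x^-1 -> conj2 x^-1 = (conj2 x)^-1.
Proof.
move=> Qx QxV; have [->|x_neq0] := eqVneq x 0.
  by rewrite invr0 -(rmorph0 (@ratr R)) conj2_rat rmorph0 invr0.
apply/esym/mulr1_eq.
by rewrite -conj2M // mulfV // conj2_1.
Qed.

Lemma conj2Z x (k : int) : inQsqrt2 x -> inQsqrt2 x^-1 -> conj2 (x ^ k) = conj2 x ^ k.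
Proof.
move=> Qx QxV; case: k => n; first by rewrite -!exprnP conj2X.
by rewrite NegzE -!exprnN -!exprVn conj2X // conj2V.
Qed.

Lemma inQsqrt2Z x (k : int) : inQsqrt2 x -> inQsqrt2 x^-1 -> inQsqrt2 (x ^ k).
Proof.
move=> Qx QxV; case: k => n; first by rewrite -exprnP; apply: inQsqrt2X.
by rewrite NegzE -exprnN -exprVn; apply: inQsqrt2X.
Qed.

Lemma inQsqrt2_lam : inQsqrt2 lam.
Proof. by exists 1, 1; rewrite rmorph1 mul1r. Qed.

Lemma inQsqrt2_lamV : inQsqrt2 lam^-1.
Proof. by exists (-1), 1; rewrite lamV rmorphN !rmorph1 mul1r addrC. Qed.

Lemma conj2_lam : conj2 lam = 1 - s2.
Proof. by have := conj2E 1 1; rewrite !rmorph1 !mul1r. Qed.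

Lemma conj2_lamV : conj2 lam^-1 = -1 - s2.
Proof. by rewrite lamV addrC; have := conj2E (-1) 1; rewrite rmorphN !rmorph1 !mul1r. Qed.

Lemma inQsqrt2_lamZ (k : int) : inQsqrt2 (lam ^ k).
Proof. by apply: inQsqrt2Z; [apply: inQsqrt2_lam | apply: inQsqrt2_lamV]. Qed.

Lemma inQsqrt2_lamVZ (k : int) : inQsqrt2 (lam^-1 ^ k).
Proof. by apply: inQsqrt2Z; rewrite ?invrK; [apply: inQsqrt2_lamV | apply: inQsqrt2_lam]. Qed.

Lemma conj2_lamZ (k : int) : conj2 (lam ^ k) = (1 - s2) ^ k.
Proof.
by rewrite conj2Z ?conj2_lam //; [apply: inQsqrt2_lam | apply: inQsqrt2_lamV].
Qed.

Lemma conj2_lamVZ (k : int) : conj2 (lam^-1 ^ k) = (-1 - s2) ^ k.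
Proof.
rewrite conj2Z ?conj2_lamV ?invrK //; [apply: inQsqrt2_lamV | apply: inQsqrt2_lam].
Qed.

Lemma grid_op_inQsqrt2 (G : 'M[R]_2) : grid_op G -> forall i j, inQsqrt2 (G i j).
Proof.
have Qhalf (a b : int) : inQsqrt2 (a%:~R + b%:~R * (s2 / 2)).
  by exists a%:~R, (b%:~R / 2); rewrite fmorph_div !ratr_int (rmorph_nat _ 2); field.
have Q_zomega x y : inZomega (vec2 x y) -> inQsqrt2 x /\ inQsqrt2 y.
  move=> /inZomegaE [a0 [a1 [a2 [a3 e]]]].
  have := congr1 (fun w : 'cV[R]_2 => w ord0 ord0) e.
  have := congr1 (fun w : 'cV[R]_2 => w ord_max ord0) e.
  by rewrite !mxE /= -!intrB -!intrD => -> ->.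
move=> gridG i j.
have Z0 : inZomega (om0 R) by apply: (@inZomega_vec2 1 0 0 0); ring.
have Z2 : inZomega (om2 R) by apply: (@inZomega_vec2 0 0 1 0); ring.
move: (gridG _ Z0) (gridG _ Z2); rewrite /om0 /om2 !mulmx_vec2 !mulr1 !mulr0 !addr0 !add0r.
move=> /Q_zomega [Q00 Q10] /Q_zomega [Q01 Q11].
by case: (ord2P i) => ->; case: (ord2P j) => ->.
Qed.

Lemma bullet_sandwich a b c d (M : 'M[R]_2) :
  inQsqrt2 a -> inQsqrt2 b -> inQsqrt2 c -> inQsqrt2 d -> (forall i j, inQsqrt2 (M i j)) ->
  bullet (diag2 a b * M * diag2 c d)
    = diag2 (conj2 a) (conj2 b) * bullet M * diag2 (conj2 c) (conj2 d).
Proof.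
move=> Qa Qb Qc Qd QM; apply/matrixP => i j.
rewrite mxE !mul_mx_diag2 !mul_diag2_mx mxE.
by case: (i == ord0); case: (j == ord0); rewrite !conj2M //; apply: inQsqrt2M.
Qed.

End GridOperators.

Theorem lemma5p43 (R : rcfType) (G : 'M[R]_2) (k : int) :
  special_grid_op G ->
  special_grid_op ((sigma R) ^ k * G * (sigma R) ^ k) /\
  bullet ((sigma R) ^ k * G * (sigma R) ^ k)
    = (- tau R) ^ k * bullet G * (tau R) ^ k.
Proof.
move=> [gridG detG]; rewrite sigma_sandwich tau_sandwich.
have lamZK : lam R ^ k * (lam R)^-1 ^ k = 1 by rewrite -expfzMl mulfV ?lam_neq0 ?exp1rz.
split; first split.
- by apply: grid_opM (grid_opM (grid_op_diag2_lamZ_1 k) gridG) (grid_op_diag2_1_lamVZ k).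
- by rewrite -!mulmxE !det_mulmx !det_diag2 mulr1 mul1r mulrAC lamZK mul1r.
rewrite bullet_sandwich ?conj2_lamZ ?conj2_lamVZ ?conj2_1 //.
- exact: inQsqrt2_lamZ.
- exact: inQsqrt2_1.
- exact: inQsqrt2_1.
- exact: inQsqrt2_lamVZ.
- exact: grid_op_inQsqrt2.
Qed.
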